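(* Let $G_1$ be a $(q_1,q_2)$-semi-regular bipartite graph with bipartition $V_1,V_2$, $|V_1|=n_1\le n_2=|V_2|$, and put $\nu_1=n_1+n_2$, $\epsilon_1=n_1q_1=n_2q_2$. Let $G_2$ be a $(q_3,q_4)$-semi-regular bipartite graph with bipartition $V_3,V_4$, $|V_3|=n_3\le n_4=|V_4|$, and put $\nu_2=n_3+n_4$, $\epsilon_2=n_3q_3=n_4q_4$. Write the adjacency spectra as multisets $$spec(G_1)=\{\pm\lambda_1,\dots,\pm\lambda_{k_1},\underbrace{0,\dots,0}_{\nu_1-2k_1}\},\qquad spec(G_2)=\{\pm\mu_1,\dots,\pm\mu_{k_2},\underbrace{0,\dots,0}_{\nu_2-2k_2}\},$$ where $k_1$ (resp. $k_2$) is the number of positive eigenvalues of $G_1$ (resp. $G_2$), $\sqrt{q_1q_2}=\lambda_1\ge\lambda_2\ge\dots\ge\lambda_{k_1}>0$ and $\sqrt{q_3q_4}=\mu_1\ge\mu_2\ge\dots\ge\mu_{k_2}>0$. Let $G=G_1\vee G_2$ and let $\theta_1,\theta_2,\theta_3,\theta_4$ be the zeros of $$f(\lambda)=\lambda^4-(q_1q_2+q_3q_4+\nu_1\nu_2)\lambda^2-2(\nu_1\epsilon_2+\nu_2\epsilon_1)\lambda+q_1q_2q_3q_4-4\epsilon_1\epsilon_2.$$ Then, as multisets, $$spec(G)=\{\theta_1,\theta_2,\theta_3,\theta_4,\pm\lambda_2,\dots,\pm\lambda_{k_1},\pm\mu_2,\dots,\pm\mu_{k_2},\underbrace{0,\d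ots,0}_{\nu_1-2k_1+\nu_2-2k_2}\}.$$
   Context: A bipartite graph with bipartition $(V_1,V_2)$ is $(q_1,q_2)$-semi-regular if every vertex of $V_1$ has degree $q_1$ and every vertex of $V_2$ has degree $q_2$ (here $q_1,q_2\ge 1$). The join $G_1\vee G_2$ has vertex set $V(G_1)\cup V(G_2)$ (disjoint) and edge set $E(G_1)\cup E(G_2)\cup\{uv: u\in V(G_1), v\in V(G_2)\}$. The spectrum $spec(G)$ of a graph is the multiset of eigenvalues of its adjacency matrix. It is a known fact that the spectrum of a $(q_1,q_2)$-semi-regular bipartite graph is symmetric about $0$ with largest eigenvalue $\sqrt{q_1q_2}$, so the displayed forms of $spec(G_1)$, $spec(G_2)$ are notation. *)

From mathcomp Require Import all_boot all_order all_algebra.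
Set Implicit Arguments. Unset Strict Implicit. Unset Printing Implicit Defensive.
Import Order.TTheory GRing.Theory Num.Theory.
Local Open Scope ring_scope.

Definition simple_graph (T : finType) (e : rel T) : Prop :=
  symmetric e /\ irreflexive e.

Definition semi_regular_bipartite (T : finType) (e : rel T) (A : {set T})
    (q1 q2 : nat) : Prop :=
  [/\ simple_graph e,
      forall x y, e x y -> (x \in A) != (y \in A),
      forall x, x \in A -> #|[set y | e x y]| = q1
    & forall x, x \notin A -> #|[set y | e x y]| = q2].

Definition join_rel (T1 T2 : finType) (e1 : rel T1) (e2 : rel T2) : rel (T1 + T2) :=
  fun u v => match u, v with
             | inl x, inl y => e1 x y
             | inr x, inr y => e2 x y
             | _, _ => true
             end.

Definition adjmx (R : nzRingType) (T : finType) (e : rel T) : 'M[R]_#|T| :=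
  \matrix_(i, j) (e (enum_val i) (enum_val j))%:R.

(* spec(A) = s as multisets: s is the multiset of eigenvalues of A (roots of
   the characteristic polynomial counted with multiplicity). *)
Definition spec_is (R : comNzRingType) (n : nat) (A : 'M[R]_n) (s : seq R) : Prop :=
  char_poly A = \prod_(x <- s) ('X - x%:P).

Definition pm_seq (R : zmodType) (s : seq R) : seq R :=
  flatten [seq [:: x; - x] | x <- s].

From mathcomp Require Import all_boot all_order all_algebra.
From mathcomp Require Import ring.
Set Implicit Arguments. Unset Strict Implicit. Unset Printing Implicit Defensive.
Import Order.TTheory GRing.Theory Num.Theory.
Local Open Scope ring_scope.

(* The adjacency matrix of G1 \/ G2 is the block matrix [A1 J; J A2], J all ones.
   The Schur complement and the rank-one determinant identity give, for every x
   outside the spectra of A1 and A2,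
     phi_G(x) = phi_1(x) phi_2(x) (1 - s_1(x) s_2(x)),  s_i(x) = 1^T (x - A_i)^-1 1.
   For a (q1,q2)-semi-regular bipartite graph the characteristic vectors of the two
   sides span an A-stable plane containing 1, whence
   s_1(x) = (nu1 x + 2 eps1) / (x^2 - q1 q2).  So phi_G (x^2 - q1q2)(x^2 - q3q4)
   = phi_1 phi_2 f as polynomials, and cancelling the factors x^2 - lambda_1^2 of
   phi_1 and x^2 - mu_1^2 of phi_2 leaves the claimed spectrum. *)

Section DeterminantIdentities.
Variable F : fieldType.

Lemma det_block_schur n m (P : 'M[F]_n) (Q : 'M[F]_(n, m)) (C : 'M[F]_(m, n))
    (S : 'M[F]_m) :
  P \in unitmx -> \det (block_mx P Q C S) = \det P * \det (S - C *m invmx P *m Q).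
Proof.
move=> uP.
have -> : block_mx P Q C S =
    block_mx 1%:M 0 (C *m invmx P) 1%:M *m block_mx P Q 0 (S - C *m invmx P *m Q).
  by rewrite mulmx_block !mul1mx !mul0mx mulmxKV // !addr0 ?add0r addrC subrK.
by rewrite det_mulmx det_lblock det_ublock !det1 !mul1r.
Qed.

Lemma det_1_sub_mulmxC n m (A : 'M[F]_(n, m)) (B : 'M[F]_(m, n)) :
  \det (1%:M - A *m B) = \det (1%:M - B *m A).
Proof.
have factor2 : block_mx 1%:M 0 A 1%:M *m block_mx 1%:M B 0 (1%:M - A *m B) =
               block_mx 1%:M B 0 1%:M *m block_mx (1%:M - B *m A) 0 A 1%:M.
  rewrite !mulmx_block !mul1mx !mul0mx !mulmx1 ?mulmx0 !addr0 ?add0r.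
  by rewrite addrC subrK subrK.
move/(congr1 determinant): factor2.
by rewrite !det_mulmx det_lblock !det_ublock det_lblock !det1 !mul1r !mulr1.
Qed.

Definition sum_invmx n (P : 'M[F]_n) : F :=
  ((const_mx 1 : 'rV_n) *m invmx P *m (const_mx 1 : 'cV_n)) 0 0.

Lemma const_mx1_mulmx n m :
  (const_mx 1 : 'M[F]_(n, m)) = (const_mx 1 : 'cV_n) *m const_mx 1.
Proof. by apply/matrixP=> i j; rewrite !mxE big_ord1 !mxE mulr1. Qed.

Lemma det_block_const_mxN1 n m (P : 'M[F]_n) (S : 'M[F]_m) :
  P \in unitmx -> S \in unitmx ->
  \det (block_mx P (- const_mx 1) (- const_mx 1) S) =
  \det P * \det S * (1 - sum_invmx P * sum_invmx S).
Proof.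
move=> uP uS; rewrite det_block_schur // !(mulNmx, mulmxN, opprK).
rewrite [X in X *m _ *m _]const_mx1_mulmx [X in _ *m X]const_mx1_mulmx.
set u := (const_mx 1 : 'cV_m); set v := (const_mx 1 : 'rV_m).
have -> : u *m const_mx 1 *m invmx P *m (const_mx 1 *m v) = sum_invmx P *: (u *m v).
  by rewrite scalemxAl -mul_mx_scalar /sum_invmx -mx11_scalar !mulmxA.
have -> : S - sum_invmx P *: (u *m v) = S *m (1%:M - (sum_invmx P *: (invmx S *m u)) *m v).
  by rewrite mulmxBr mulmx1 -scalemxAl -scalemxAr mulmxA mulKVmx.
rewrite det_mulmx det_1_sub_mulmxC -scalemxAr mulmxA (mx11_scalar (v *m _ *m u)).
by rewrite scale_scalar_mx -raddfB det_scalar1 mulrA.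
Qed.

End DeterminantIdentities.

Section CharacteristicVectors.
Variables (R : nzRingType) (T : finType).

Definition charvec (W : {set T}) : 'cV[R]_#|T| := \col_i (enum_val i \in W)%:R.

Lemma sum_enum_val_nat (P : pred T) :
  \sum_(i < #|T|) ((P (enum_val i))%:R : R) = #|[set y | P y]|%:R.
Proof.
have -> : \sum_(i < #|T|) ((P (enum_val i))%:R : R) = \sum_(y : T) (P y)%:R.
  by rewrite (big_enum_val (fun y => ((P y)%:R : R))).
rewrite -sum1dep_card natr_sum [RHS]big_mkcond.
by apply: eq_bigr => y _; case: (P y).
Qed.

Lemma adjmx_charvec (e : rel T) (W : {set T}) i :
  (adjmx R e *m charvec W) i 0 = #|[set y | e (enum_val i) y & y \in W]|%:R.
Proof.
rewrite mxE -sum_enum_val_nat; apply: eq_bigr => j _.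
by rewrite !mxE -natrM mulnb.
Qed.

Lemma const_mx1_charvec (W : {set T}) :
  (const_mx 1 : 'rV[R]_#|T|) *m charvec W = #|W|%:R%:M.
Proof.
apply/matrixP=> i j; rewrite !ord1 !mxE -cardsE -sum_enum_val_nat.
by apply: eq_bigr => k _; rewrite !mxE mul1r.
Qed.

Lemma charvec_setC (W : {set T}) : charvec W + charvec (~: W) = const_mx 1.
Proof. by apply/matrixP=> i j; rewrite !mxE in_setC; case: (_ \in W); rewrite ?addr0 ?add0r. Qed.

End CharacteristicVectors.

Section SemiRegularBipartite.
Variables (T : finType) (e : rel T) (V : {set T}) (q1 q2 : nat).
Hypothesis srb : semi_regular_bipartite e V q1 q2.

Lemma semi_regular_bipartite_sym : symmetric e.
Proof. by case: srb => [[]]. Qed.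

Lemma semi_regular_bipartite_edge x y : e x y -> (y \in V) = (x \notin V).
Proof. by case: srb => _ bip _ _ /bip; case: (x \in V); case: (y \in V). Qed.

Lemma semi_regular_bipartite_edge_count : (#|V| * q1 = #|~: V| * q2)%N.
Proof.
case: srb => _ _ degV degVC.
have deg_sum x (W : {set T}) : (forall y, e x y -> y \in W) ->
    #|[set y | e x y]| = (\sum_(y in W) (e x y : nat))%N.
  move=> eW; rewrite -sum1dep_card big_mkcond [RHS]big_mkcond.
  by apply: eq_bigr => y _; case: (boolP (e x y)) => [/eW ->|]; case: (y \in W).
rewrite -!sum_nat_const.
transitivity (\sum_(x in V) \sum_(y in ~: V) (e x y : nat))%N.
  apply: eq_bigr => x xV; rewrite -(degV x xV) (deg_sum x (~: V)) // => y.
  by rewrite inE => /semi_regular_bipartite_edge ->; rewrite xV.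
rewrite exchange_big /=; apply: eq_bigr => y yVC.
rewrite -(degVC y) -?in_setC // (deg_sum y V) => [|x].
  by apply: eq_bigr => x _; rewrite semi_regular_bipartite_sym.
by move=> /semi_regular_bipartite_edge ->; rewrite -in_setC.
Qed.

Variable F : fieldType.
Local Notation A := (adjmx F e).

Lemma adjmx_charvec_semi_regular : A *m charvec F V = q2%:R *: charvec F (~: V).
Proof.
case: srb => _ _ _ degVC; apply/matrixP=> i j; rewrite (ord1 j) adjmx_charvec !mxE inE.
have [xV|xVC] := boolP (enum_val i \in V); rewrite /= ?mulr0 ?mulr1.
  rewrite (_ : [set y | _] = set0) ?cards0 //; apply/setP=> y; rewrite !inE.
  by apply/negbTE/andP=> -[/semi_regular_bipartite_edge ->]; rewrite xV.
rewrite -(degVC _ xVC); congr _%:R; apply: eq_card => y; rewrite !inE.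
by case exy: (e _ y); rewrite // (semi_regular_bipartite_edge exy).
Qed.

Lemma adjmx_charvecC_semi_regular : A *m charvec F (~: V) = q1%:R *: charvec F V.
Proof.
case: srb => _ _ degV _; apply/matrixP=> i j; rewrite (ord1 j) adjmx_charvec !mxE.
have [xV|xVC] := boolP (enum_val i \in V); rewrite /= ?mulr0 ?mulr1.
  rewrite -(degV _ xV); congr _%:R; apply: eq_card => y; rewrite !inE.
  by case exy: (e _ y); rewrite // (semi_regular_bipartite_edge exy) xV.
rewrite (_ : [set y | _] = set0) ?cards0 //; apply/setP=> y; rewrite !inE.
by apply/negbTE/andP=> -[/semi_regular_bipartite_edge ->]; rewrite xVC.
Qed.

Lemma sum_invmx_semi_regular_bipartite x :
  x ^+ 2 != (q1 * q2)%:R -> x%:M - A \in unitmx ->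
  sum_invmx (x%:M - A) =
  ((#|V| + #|~: V|)%:R * x + 2 * (#|V| * q1)%:R) / (x ^+ 2 - (q1 * q2)%:R).
Proof.
move=> hx uP; have d0 : x ^+ 2 - (q1 * q2)%:R != 0 by rewrite subr_eq0.
pose a := (x + q1%:R) / (x ^+ 2 - (q1 * q2)%:R).
pose b := (x + q2%:R) / (x ^+ 2 - (q1 * q2)%:R).
have inv_ones : (x%:M - A) *m (a *: charvec F V + b *: charvec F (~: V)) = const_mx 1.
  rewrite mulmxBl mul_scalar_mx mulmxDr -!scalemxAr adjmx_charvec_semi_regular adjmx_charvecC_semi_regular.
  rewrite -(charvec_setC F V); apply/matrixP=> i j; rewrite !mxE /a /b.
  by rewrite natrM in d0 *; field.
rewrite /sum_invmx -mulmxA -inv_ones mulKmx // mulmxDr -!scalemxAr !const_mx1_charvec.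
have /(congr1 (fun n => n%:R : F)) edges := semi_regular_bipartite_edge_count.
have -> : 2 * (#|V| * q1)%:R = (#|V| * q1)%:R + (#|~: V| * q2)%:R :> F.
  by rewrite mulr_natl mulr2n {2}edges.
by rewrite !mxE eqxx !mulr1n /a /b !natrD !natrM in d0 *; field.
Qed.

End SemiRegularBipartite.

Lemma enum_val_sum_lshift (T1 T2 : finType) (k : 'I_#|T1|) :
  enum_val (cast_ord (esym (card_sum T1 T2)) (lshift #|T2| k)) = inl (enum_val k).
Proof.
rewrite (enum_val_nth (inl (enum_val k))) enumT unlock /= /sum_enum nth_cat.
rewrite size_map -enumT -cardT /= ltn_ord (nth_map (enum_val k)) -?cardT ?ltn_ord //.
by rewrite -enum_val_nth.
Qed.

Lemma enum_val_sum_rshift (T1 T2 : finType) (k : 'I_#|T2|) :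
  enum_val (cast_ord (esym (card_sum T1 T2)) (rshift #|T1| k)) = inr (enum_val k).
Proof.
rewrite (enum_val_nth (inr (enum_val k))) enumT unlock /= /sum_enum nth_cat.
rewrite size_map -enumT -cardT /= ltnNge leq_addr /= addKn.
rewrite (nth_map (enum_val k)) -enumT ?cardT -?cardT ?ltn_ord //.
by rewrite -enum_val_nth.
Qed.

Lemma adjmx_join (R : nzRingType) (T1 T2 : finType) (e1 : rel T1) (e2 : rel T2) :
  castmx (card_sum T1 T2, card_sum T1 T2) (adjmx R (join_rel e1 e2)) =
  block_mx (adjmx R e1) (const_mx 1) (const_mx 1) (adjmx R e2).
Proof.
apply/matrixP=> i j; rewrite castmxE -(splitK i) -(splitK j).
case: (split i) => a; case: (split j) => b.
- by rewrite block_mxEul !mxE !enum_val_sum_lshift.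
- by rewrite block_mxEur !mxE enum_val_sum_lshift enum_val_sum_rshift.
- by rewrite block_mxEdl !mxE enum_val_sum_lshift enum_val_sum_rshift.
- by rewrite block_mxEdr !mxE !enum_val_sum_rshift.
Qed.

Lemma char_poly_castmx (R : comNzRingType) n m (eq_nm : n = m) (A : 'M[R]_n) :
  char_poly (castmx (eq_nm, eq_nm) A) = char_poly A.
Proof. by case: m / eq_nm; rewrite castmx_id. Qed.

Lemma horner_char_poly (R : comNzRingType) n (A : 'M[R]_n) x :
  (char_poly A).[x] = \det (x%:M - A).
Proof.
rewrite -horner_evalE -det_map_mx; congr (\det _); apply/matrixP=> i j.
by rewrite !mxE /= !horner_evalE hornerD hornerN hornerMn hornerX hornerC.
Qed.

Lemma horner_char_poly_join (F : fieldType) (T1 T2 : finType) (e1 : rel T1)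
    (e2 : rel T2) x :
  let P1 := x%:M - adjmx F e1 in let P2 := x%:M - adjmx F e2 in
  P1 \in unitmx -> P2 \in unitmx ->
  (char_poly (adjmx F (join_rel e1 e2))).[x] =
  (char_poly (adjmx F e1)).[x] * (char_poly (adjmx F e2)).[x] *
  (1 - sum_invmx P1 * sum_invmx P2).
Proof.
move=> P1 P2 uP1 uP2.
rewrite -(char_poly_castmx (card_sum T1 T2)) adjmx_join !horner_char_poly.
by rewrite scalar_mx_block opp_block_mx add_block_mx !add0r det_block_const_mxN1.
Qed.

Lemma eq_poly_outside_roots (R : numDomainType) (p q g : {poly R}) :
  g != 0 -> (forall x, g.[x] != 0 -> p.[x] = q.[x]) -> p = q.
Proof.
move=> g0 eq_pq; pose h := (p - q) * g.
suff /eqP : h = 0 by rewrite mulf_eq0 (negbTE g0) orbF subr_eq0 => /eqP.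
apply: (@roots_geq_poly_eq0 _ _ [seq i%:R | i <- iota 0 (size h)]).
- apply/allP=> y _; rewrite /root /h !hornerE.
  by have [->|/eq_pq ->] := eqVneq g.[y] 0; rewrite ?mulr0 ?subrr ?mul0r.
- by rewrite map_inj_uniq ?iota_uniq // => i j /eqP; rewrite eqr_nat => /eqP.
- by rewrite size_map size_iota.
Qed.

Lemma char_poly_join_semi_regular_bipartite (R : numFieldType)
    (T1 : finType) (e1 : rel T1) (V1 : {set T1}) (q1 q2 : nat)
    (T2 : finType) (e2 : rel T2) (V3 : {set T2}) (q3 q4 : nat) :
  semi_regular_bipartite e1 V1 q1 q2 ->
  semi_regular_bipartite e2 V3 q3 q4 ->
  let nu1 := (#|V1| + #|~: V1|)%N in let eps1 := (#|V1| * q1)%N in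
  let nu2 := (#|V3| + #|~: V3|)%N in let eps2 := (#|V3| * q3)%N in
  char_poly (adjmx R (join_rel e1 e2)) *
    (('X^2 - ((q1 * q2)%:R)%:P) * ('X^2 - ((q3 * q4)%:R)%:P)) =
  char_poly (adjmx R e1) * char_poly (adjmx R e2) *
  ('X^4 - ((q1 * q2 + q3 * q4 + nu1 * nu2)%N)%:R *: 'X^2
       - ((2 * (nu1 * eps2 + nu2 * eps1))%N)%:R *: 'X
       + ((q1 * q2 * q3 * q4)%N)%:R%:P - ((4 * eps1 * eps2)%N)%:R%:P).
Proof.
move=> srb1 srb2 nu1 eps1 nu2 eps2.
pose g := char_poly (adjmx R e1) * char_poly (adjmx R e2) *
  (('X^2 - ((q1 * q2)%:R)%:P) * ('X^2 - ((q3 * q4)%:R)%:P)).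
apply: (@eq_poly_outside_roots _ _ _ g).
  by rewrite !mulf_neq0 ?monic_neq0 ?char_poly_monic ?monicXnsubC.
move=> x; rewrite !hornerM !mulf_eq0 !negb_or => /and3P[/andP[c1 c2] d1 d2].
have u1 : x%:M - adjmx R e1 \in unitmx by rewrite unitmxE unitfE -horner_char_poly.
have u2 : x%:M - adjmx R e2 \in unitmx by rewrite unitmxE unitfE -horner_char_poly.
rewrite !hornerE in d1 d2.
have d1' : x ^+ 2 != (q1 * q2)%:R by rewrite -subr_eq0.
have d2' : x ^+ 2 != (q3 * q4)%:R by rewrite -subr_eq0.
rewrite horner_char_poly_join // (sum_invmx_semi_regular_bipartite srb1) //.
rewrite (sum_invmx_semi_regular_bipartite srb2) //.
rewrite !(hornerD, hornerN, hornerZ, hornerXn, hornerX, hornerC).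
by rewrite /nu1 /nu2 /eps1 /eps2 !natrM !natrD !natrM in d1 d2 *; field; rewrite d1 d2.
Qed.

Lemma big_pm_seq_cons (R : comNzRingType) (l : R) (s : seq R) :
  \prod_(x <- pm_seq (l :: s)) ('X - x%:P) =
  ('X^2 - (l ^+ 2)%:P) * \prod_(x <- pm_seq s) ('X - x%:P).
Proof. by rewrite /pm_seq /= !big_cons mulrA expr2 polyCM polyCN; congr (_ * _); ring. Qed.

Theorem theorem3p1 (R : numClosedFieldType)
    (T1 : finType) (e1 : rel T1) (V1 : {set T1}) (q1 q2 : nat)
    (T2 : finType) (e2 : rel T2) (V3 : {set T2}) (q3 q4 : nat)
    (lam mu : seq R) (theta : seq R) :
  (1 <= q1)%N -> (1 <= q2)%N -> (1 <= q3)%N -> (1 <= q4)%N ->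
  semi_regular_bipartite e1 V1 q1 q2 ->
  semi_regular_bipartite e2 V3 q3 q4 ->
  (#|V1| <= #|~: V1|)%N ->
  (#|V3| <= #|~: V3|)%N ->
  let n1 := #|V1| in let n2 := #|~: V1| in
  let n3 := #|V3| in let n4 := #|~: V3| in
  let nu1 := (n1 + n2)%N in let eps1 := (n1 * q1)%N in
  let nu2 := (n3 + n4)%N in let eps2 := (n3 * q3)%N in
  let k1 := size lam in let k2 := size mu in
  (* spec(G1) = {±λ_1,...,±λ_k1, 0^(ν1-2k1)}, λ_1 = √(q1q2) ≥ ... ≥ λ_k1 > 0 *)
  (0 < k1)%N -> sorted (fun x y => y <= x) lam -> all (fun x => 0 < x) lam ->
  lam`_0 = sqrtC (q1 * q2)%:R ->
  (2 * k1 <= nu1)%N ->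
  spec_is (adjmx R e1) (pm_seq lam ++ nseq (nu1 - 2 * k1) 0) ->
  (* spec(G2) = {±μ_1,...,±μ_k2, 0^(ν2-2k2)}, μ_1 = √(q3q4) ≥ ... ≥ μ_k2 > 0 *)
  (0 < k2)%N -> sorted (fun x y => y <= x) mu -> all (fun x => 0 < x) mu ->
  mu`_0 = sqrtC (q3 * q4)%:R ->
  (2 * k2 <= nu2)%N ->
  spec_is (adjmx R e2) (pm_seq mu ++ nseq (nu2 - 2 * k2) 0) ->
  (* θ_1,...,θ_4 are the zeros (with multiplicity) of f *)
  size theta = 4%N ->
  'X^4 - ((q1 * q2 + q3 * q4 + nu1 * nu2)%N)%:R *: 'X^2
       - ((2 * (nu1 * eps2 + nu2 * eps1))%N)%:R *: 'X
       + ((q1 * q2 * q3 * q4)%N)%:R%:P - ((4 * eps1 * eps2)%N)%:R%:P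
    = \prod_(t <- theta) ('X - t%:P) :> {poly R} ->
  spec_is (adjmx R (join_rel e1 e2))
    (theta ++ pm_seq (behead lam) ++ pm_seq (behead mu)
           ++ nseq ((nu1 - 2 * k1) + (nu2 - 2 * k2)) 0).
Proof.
(* Only semi-regularity, the two spectra, the values of lambda_1 and mu_1 and the
   factorisation of f are used. *)
move=> _ _ _ _ srb1 srb2 _ _; cbv zeta.
case: lam => [|l lam] // _ _ _ l0 _ spec1.
case: mu => [|m mu] // _ _ _ m0 _ spec2 _ f_roots.
have l2 : l ^+ 2 = (q1 * q2)%:R by rewrite (l0 : l = _) sqrtCK.
have m2 : m ^+ 2 = (q3 * q4)%:R by rewrite (m0 : m = _) sqrtCK.
have := char_poly_join_semi_regular_bipartite R srb1 srb2; cbv zeta.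
rewrite /spec_is in spec1 spec2 *.
rewrite spec1 spec2 f_roots (big_cat _ (pm_seq (l :: lam))).
rewrite (big_cat _ (pm_seq (m :: mu))) !big_pm_seq_cons l2 m2.
set d1 := 'X^2 - _; set d2 := 'X^2 - _.
have d12 : d1 * d2 != 0 by rewrite mulf_neq0 // monic_neq0 // monicXnsubC.
by move=> join_eq; apply: (mulIf d12); rewrite join_eq nseqD !big_cat /=; ring.
Qed.
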